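(* Let $\mathfrak{R}$ be either $\mathbb{F}_q$ ($q$ a prime power) or $\mathbb{Z}_k$ ($k\ge 2$), with character $\chi$ as in the context. Let $C$ be an $\mathfrak{R}$-linear code of length $n$ and $\bm{w}\in\mathfrak{R}^n$. Then \[ Jac^{av}(C^{\perp},\bm{w}; x_{a} : a \in \mathfrak{R}^{2})=\frac{1}{|C|}\,Jac^{av}\Big(C,\bm{w};\ \sum_{b\in\mathfrak{R}}\chi(a_1 b)\,x_{(b,a_2)} : a=(a_1,a_2)\in\mathfrak{R}^{2}\Big), \] where the right-hand side is $Jac^{av}(C,\bm{w};x_a:a\in\mathfrak{R}^2)$ with each $x_{(a_1,a_2)}$ replaced by $\sum_{b}\chi(a_1b)x_{(b,a_2)}$.
   Context: An $\mathbb{F}_q$-linear code of length $n$ is a subspace of $\mathbb{F}_q^n$; a $\mathbb{Z}_k$-linear code is an additive subgroup of $\mathbb{Z}_k^n$. $C^\perp=\{\bm{v}\in\mathfrak{R}^n : \sum_i u_iv_i=0\ \forall \bm{u}\in C\}$. The character $\chi$: if $\mathfrak{R}=\mathbb{F}_q$, $q=p^f$, fix a root $\lambda$ of a primitive irreducible polynomial of degree $f$ over $\mathbb{F}_p$, write $\alpha=\alpha_0+\alpha_1\lambda+\cdots+\alpha_{f-1}\lambda^{f-1}$ ($\alpha_i\in\mathbb{F}_p$) and set $\chi(\alpha)=\zeta_p^{\alpha_0}$; if $\mathfrak{R}=\mathbb{Z}_k$, $\chi(\alpha)=\zeta_k^{\alpha}$ ($\zeta_m$ a primitive $m$-th root of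 unity). For $a\in\mathfrak{R}^2$, $r_a(\bm{u};\bm{w})=\#\{i:(u_i,w_i)=a\}$, and $Jac(C,\bm{w};x_a:a\in\mathfrak{R}^2)=\sum_{\bm{u}\in C}\prod_{a\in\mathfrak{R}^2}x_a^{r_a(\bm{u};\bm{w})}$. For $\sigma\in S_n$ and $\bm{u}\in\mathfrak{R}^n$, $\bm{u}^\sigma=(u_{\sigma(1)},\dots,u_{\sigma(n)})$ and $C^\sigma=\{\bm{u}^\sigma:\bm{u}\in C\}$. The average Jacobi polynomial is $Jac^{av}(C,\bm{w};x_a:a\in\mathfrak{R}^2)=\frac{1}{n!}\sum_{\sigma\in S_n}Jac(C^\sigma,\bm{w};x_a:a\in\mathfrak{R}^2)$. *)

From HB Require Import structures.
From mathcomp Require Import all_boot all_order all_algebra all_fingroup all_field.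
From mathcomp Require Import mpoly.

Set Implicit Arguments.
Unset Strict Implicit.
Unset Printing Implicit Defensive.

Import GRing.Theory.
Local Open Scope ring_scope.

Section Jacobi.
Variables (R : finComNzRingType) (n : nat).

(* Linear codes: F_q-linear = subspace, Z_k-linear = additive subgroup. *)
Definition additive_code (C : {set 'rV[R]_n}) : bool :=
  (0 \in C) && [forall u in C, forall v in C, u - v \in C].

Definition subspace_code (C : {set 'rV[R]_n}) : bool :=
  additive_code C && [forall a : R, forall u in C, a *: u \in C].

Definition dual_code (C : {set 'rV[R]_n}) : {set 'rV[R]_n} :=
  [set v : 'rV[R]_n | [forall u in C, \sum_(i < n) u ord0 i * v ord0 i == 0]].

Definition r_count (a : R * R) (u w : 'rV[R]_n) : nat :=
  #|[set i : 'I_n | (u ord0 i, w ord0 i) == a]|.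

Definition perm_vec (s : 'S_n) (u : 'rV[R]_n) : 'rV[R]_n :=
  \row_(i < n) u ord0 (s i).
Definition perm_code (C : {set 'rV[R]_n}) (s : 'S_n) : {set 'rV[R]_n} :=
  [set perm_vec s u | u in C].

Definition NV := #|{: R * R}|.
Notation Pol := {mpoly algC[NV]}.

Definition xvar (a : R * R) : Pol := 'X_(enum_rank a).

(* Jac(C, w; y_a : a in R^2) for an arbitrary family y of polynomials
   (y = xvar gives the Jacobi polynomial; other y give substitutions). *)
Definition Jac (C : {set 'rV[R]_n}) (w : 'rV[R]_n) (y : R * R -> Pol) : Pol :=
  \sum_(u in C) \prod_(a : R * R) y a ^+ r_count a u w.

Definition JacAv (C : {set 'rV[R]_n}) (w : 'rV[R]_n) (y : R * R -> Pol) : Pol :=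
  (n`!%:R)^-1 *: \sum_(s : 'S_n) Jac (perm_code C s) w y.

Definition xsubst (chi : R -> algC) (a : R * R) : Pol :=
  \sum_(b : R) chi (a.1 * b) *: xvar (b, a.2).

End Jacobi.

Definition is_primitive_poly (p f : nat) (P : {poly 'F_p}) : Prop :=
  irreducible_poly P /\ size P = f.+1 /\
  P %| 'X^(p ^ f - 1) - 1 /\
  (forall e : nat, (0 < e)%N -> (e < p ^ f - 1)%N -> ~~ (P %| 'X^e - 1)).

(* alpha_0 : the constant coordinate of alpha in the basis 1, lam, ..., lam^(f-1)
   over F_p (elements of F_p are represented by nat's < p cast into F). *)
Definition coord0 (F : finFieldType) (p f : nat) (lam : F) (alpha : F) : nat :=
  match [pick t : f.-tuple 'I_p |
           alpha == \sum_(i < f) (nat_of_ord (tnth t i))%:R * lam ^+ i] with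
  | Some t => nth 0%N [seq nat_of_ord i | i <- t] 0
  | None => 0%N
  end.

Definition chiF (F : finFieldType) (p f : nat) (lam : F) (zeta : algC)
  (alpha : F) : algC := zeta ^+ coord0 p f lam alpha.

Definition chiZ (k : nat) (zeta : algC) (alpha : 'Z_k) : algC :=
  zeta ^+ (nat_of_ord alpha).

(** The substitution is a Fourier transform in the first coordinate:
    expanding [prod_i sum_b chi(u_i b) x_(b, w_i)] gives [sum_v chi(u.v) x^(v, w)].
    Summing over [u] in [C] and exchanging sums, orthogonality of characters
    ([sum_(u in C) chi(u.v)] is [|C|] if [v] is in the dual and [0] otherwise,
    because a character with a nontrivial value on the group [C] sums to zero)
    leaves [|C|] times the Jacobi polynomial of the dual code.  Since [C^sigma]
    with [w] behaves like [C] with [w^(sigma^-1)], the identity survives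
    averaging over [S_n].  Over [Z_k] the character [a |-> zeta^a] has trivial
    kernel; over [F_q] the map [alpha |-> alpha_0] is additive because
    [1, lam, ..., lam^(f-1)] is an [F_p]-basis ([lam] is a root of an irreducible
    polynomial of degree [f] and [|F| = p^f]), and a linear code sees every
    value of the nontrivial character by scaling. *)

From Pilot Require Import Defs.
From HB Require Import structures.
From mathcomp Require Import all_boot all_order all_algebra all_fingroup all_field.
From mathcomp Require Import mpoly.
Import GRing.Theory Num.Theory.
Local Open Scope ring_scope.
Set Implicit Arguments.
Unset Strict Implicit.
Unset Printing Implicit Defensive.

Section Codes.
Variables (R : finComNzRingType) (n : nat).
Implicit Types (C : {set 'rV[R]_n}) (u v w : 'rV[R]_n).

Definition dot u v : R := \sum_(i < n) u ord0 i * v ord0 i.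

Lemma dotDl u1 u2 v : dot (u1 + u2) v = dot u1 v + dot u2 v.
Proof. by rewrite /dot -big_split; apply: eq_bigr => i _; rewrite mxE mulrDl. Qed.

Lemma dotZl a u v : dot (a *: u) v = a * dot u v.
Proof. by rewrite /dot mulr_sumr; apply: eq_bigr => i _; rewrite mxE mulrA. Qed.

Lemma additive_code0 C : additive_code C -> 0 \in C.
Proof. by case/andP. Qed.

Lemma additive_codeD C u v : additive_code C -> u \in C -> v \in C -> u + v \in C.
Proof.
case/andP=> C0 /forall_inP subC uC vC.
have vNC : - v \in C by rewrite -sub0r; exact: (forall_inP (subC 0 C0)).
by rewrite -[v]opprK; exact: (forall_inP (subC u uC)).
Qed.

Definition separates_dual (chi : R -> algC) C :=
  forall v, v \notin dual_code C -> exists2 u, u \in C & chi (dot u v) != 1.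

Lemma perm_vecK (s : 'S_n) : cancel (@perm_vec R n s) (perm_vec s^-1).
Proof. by move=> u; apply/rowP => i; rewrite !mxE permKV. Qed.

End Codes.

Lemma separates_dual_ker1 (R : finComNzRingType) n (chi : R -> algC)
    (C : {set 'rV[R]_n}) :
  (forall a, chi a = 1 -> a = 0) -> separates_dual chi C.
Proof.
move=> chi_ker1 v; rewrite inE negb_forall_in => /existsP[u /andP[uC dot_neq0]].
by exists u => //; apply: contra dot_neq0 => /eqP/chi_ker1/eqP.
Qed.

Lemma separates_dual_subspace (F : finFieldType) n (chi : F -> algC)
    (C : {set 'rV[F]_n}) e :
  subspace_code C -> chi e != 1 -> separates_dual chi C.
Proof.
case/andP=> _ /forallP scaleC chi_e v.
rewrite inE negb_forall_in => /existsP[u /andP[uC /negPf dot_neq0]].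
exists ((e / dot u v) *: u); first exact: (forall_inP (scaleC _)).
by rewrite dotZl divfK ?dot_neq0.
Qed.

Section MacWilliams.
Variables (R : finComNzRingType) (n : nat).
Local Notation Pol := {mpoly algC[NV R]}.
Implicit Types (C : {set 'rV[R]_n}) (u v w : 'rV[R]_n).

Lemma prod_exp_r_count (y : R * R -> Pol) u w :
  \prod_(a : R * R) y a ^+ r_count a u w = \prod_(i < n) y (u ord0 i, w ord0 i).
Proof.
rewrite (partition_big (fun i => (u ord0 i, w ord0 i)) predT) //=.
apply: eq_bigr => a _; rewrite (eq_bigr (fun _ => y a)); last by move=> i /eqP ->.
by rewrite prodr_const; congr (_ ^+ _); apply: eq_card => i; rewrite inE.
Qed.

Lemma Jac_perm_code C (s : 'S_n) w (y : R * R -> Pol) :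
  Jac (perm_code C s) w y = Jac C (perm_vec s^-1 w) y.
Proof.
rewrite /Jac big_imset /=; last by move=> u v _ _; apply: (can_inj (perm_vecK s)).
apply: eq_bigr => u _; rewrite !prod_exp_r_count (reindex_inj (@perm_inj _ s^-1)).
by apply: eq_bigr => i _; rewrite !mxE permKV.
Qed.

Variable chi : R -> algC.
Hypothesis chiD : {morph chi : a b / a + b >-> a * b}.
Hypothesis chi0 : chi 0 = 1.

Lemma sum_chi_dot C v : additive_code C -> separates_dual chi C ->
  \sum_(u in C) chi (dot u v) = if v \in dual_code C then #|C|%:R else 0.
Proof.
move=> addC sepC; case: ifPn => [vCd | /sepC[u0 u0C chi_u0v]].
  rewrite (eq_bigr (fun=> 1)) ?sumr_const // => u uC.
  by move: vCd; rewrite inE => /forall_inP/(_ u uC)/eqP; rewrite /dot => ->.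
set S := \sum_(u in C) _.
have shiftC : [set u + u0 | u in C] = C.
  apply/eqP; rewrite eqEcard card_imset ?leqnn ?andbT; last exact: addIr.
  by apply/subsetP => _ /imsetP[u uC ->]; apply: additive_codeD.
have S_invariant : S = chi (dot u0 v) * S.
  rewrite {1}/S -{1}shiftC big_imset /=; last by move=> x y _ _; apply: addIr.
  by rewrite mulr_sumr; apply: eq_bigr => u _; rewrite dotDl chiD mulrC.
apply/eqP; move/eqP: S_invariant; rewrite -subr_eq0 -{1}[S]mul1r -mulrBl.
by rewrite mulf_eq0 subr_eq0 eq_sym (negbTE chi_u0v).
Qed.

Definition jac_monomial w v : Pol := \prod_(i < n) xvar (v ord0 i, w ord0 i).

(* Distributing the product picks one b per coordinate, i.e. a vector v. *)
Lemma prod_xsubst u w :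
  \prod_(i < n) xsubst chi (u ord0 i, w ord0 i) =
  \sum_v chi (dot u v) *: jac_monomial w v.
Proof.
rewrite /xsubst bigA_distr_bigA /=.
rewrite (reindex (fun v : 'rV[R]_n => [ffun i => v ord0 i])) /=; last first.
  exists (fun g : {ffun 'I_n -> R} => \row_i g i) => [v _|g _].
    by apply/rowP => i; rewrite !mxE ffunE.
  by apply/ffunP => i; rewrite ffunE mxE.
apply: eq_bigr => v _; rewrite scaler_prod (big_morph chi chiD chi0).
by congr (_ *: _); apply: eq_bigr => i _; rewrite ffunE.
Qed.

Lemma Jac_dual_code C w : additive_code C -> separates_dual chi C ->
  Jac (dual_code C) w (@xvar R) = (#|C|%:R)^-1 *: Jac C w (xsubst chi).
Proof.
move=> addC sepC; have C_gt0 : (0 < #|C|)%N.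
  by rewrite card_gt0; apply/set0Pn; exists 0; apply: additive_code0.
under [Jac C w _]eq_bigr do rewrite prod_exp_r_count prod_xsubst.
rewrite exchange_big /=.
under [X in _ *: X]eq_bigr do
  rewrite -scaler_suml sum_chi_dot // (fun_if (fun c => c *: _)) scale0r.
rewrite -big_mkcond scaler_sumr; apply: eq_bigr => v _.
rewrite scalerA mulVf ?scale1r ?prod_exp_r_count //.
by rewrite pnatr_eq0 -lt0n.
Qed.

Lemma JacAv_dual_code C w : additive_code C -> separates_dual chi C ->
  JacAv (dual_code C) w (@xvar R) = (#|C|%:R)^-1 *: JacAv C w (xsubst chi).
Proof.
move=> addC sepC; rewrite /JacAv scalerA mulrC -scalerA; congr (_ *: _).
by rewrite scaler_sumr; apply: eq_bigr => s _; rewrite !Jac_perm_code Jac_dual_code.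
Qed.

End MacWilliams.

Section CharacterZk.
Variables (k : nat) (zeta : algC).
Hypotheses (k_gt1 : (1 < k)%N) (zeta_prim : k.-primitive_root zeta).

Let zeta_prim_Zk : (Zp_trunc k).+2.-primitive_root zeta.
Proof. by rewrite Zp_cast. Qed.

Lemma chiZ_D : {morph @chiZ k zeta : a b / a + b >-> a * b}.
Proof. by move=> a b; rewrite /chiZ -exprD /= prim_expr_mod. Qed.

Lemma chiZ_eq1 (a : 'Z_k) : chiZ zeta a = 1 -> a = 0.
Proof.
move/eqP; rewrite /chiZ -(prim_order_dvd zeta_prim_Zk) => k_dvd_a.
apply: val_inj; apply/eqP; apply: contraTT k_dvd_a => a_neq0.
by rewrite gtnNdvd ?lt0n.
Qed.

End CharacterZk.

Section CharacterFq.
Variables (F : finFieldType) (p f : nat) (lam : F) (zeta : algC).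
Hypotheses (pcharF : p \in [pchar F]) (cardF : #|F| = (p ^ f)%N).
Variable P : {poly 'F_p}.
Hypotheses (P_irr : irreducible_poly P) (sizeP : size P = f.+1).
Hypothesis P_lam : root (map_poly (fun c : 'F_p => (nat_of_ord c)%:R : F) P) lam.
Hypothesis zeta_prim : p.-primitive_root zeta.

Let p_prime : prime p := pcharf_prime pcharF.
(* [F] as an [F_p]-algebra, in which the cast [c |-> c%:R] is [in_alg]. *)
Local Notation Fa := (pPrimeCharType pcharF).

Lemma natr_Fp_in_alg (c : 'F_p) : (nat_of_ord c)%:R = in_alg Fa c.
Proof. exact/esym/mulr1. Qed.

Lemma horner_in_alg_neq0 (Q : {poly 'F_p}) :
  Q != 0 -> (size Q <= f)%N -> (map_poly (in_alg Fa) Q).[lam] != 0.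
Proof.
move=> Q_neq0 sizeQ; apply: (@coprimep_root _ (map_poly (in_alg Fa) P)).
  rewrite coprimep_map irreducible_poly_coprime //.
  by apply: contraL sizeQ => /(dvdp_leq Q_neq0); rewrite sizeP -ltnNge.
by rewrite -(eq_map_poly natr_Fp_in_alg).
Qed.

Definition lam_expand (t : f.-tuple 'I_p) : F :=
  \sum_(i < f) (nat_of_ord (tnth t i))%:R * lam ^+ i.

Lemma lam_expand_inj : injective lam_expand.
Proof.
move=> t s eq_ts.
pose c (i : 'I_f) : 'F_p := (nat_of_ord (tnth t i))%:R - (nat_of_ord (tnth s i))%:R.
pose Q : {poly 'F_p} := \poly_(j < f) \sum_(i < f | val i == j) c i.
have coefQ (i : 'I_f) : Q`_i = c i by rewrite coef_poly ltn_ord (big_pred1 i).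
have sizeQ : (size Q <= f)%N by apply: size_poly.
have : (map_poly (in_alg Fa) Q).[lam] = lam_expand t - lam_expand s.
  rewrite (@horner_coef_wide _ f) ?size_map_poly // -sumrB.
  by apply: eq_bigr => i _; rewrite coef_map coefQ raddfB /= !scaler_nat -mulrBl.
rewrite eq_ts subrr => /eqP; apply: contraTeq => neq_ts.
apply: horner_in_alg_neq0 sizeQ; apply: contra_neq neq_ts => Q0.
apply: eq_from_tnth => i; apply: val_inj.
have /eqP := coefQ i; rewrite Q0 coef0 eq_sym subr_eq0 => /eqP /(congr1 val).
by rewrite /= !(val_Fp_nat p_prime) !modn_small.
Qed.

Lemma lam_expand_onto (a : F) : exists t, a = lam_expand t.
Proof.
have : a \in codom lam_expand.
  by apply: (inj_card_onto lam_expand_inj); rewrite card_tuple card_ord cardF.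
by case/codomP => t ->; exists t.
Qed.

Lemma f_gt0 : (0 < f)%N.
Proof. by move: (finNzRing_gt1 F); rewrite cardF; case: (f). Qed.

Let i0 : 'I_f := Ordinal f_gt0.

Lemma coord0_lam_expand t : Defs.coord0 p f lam (lam_expand t) = tnth t i0.
Proof.
rewrite /Defs.coord0; case: pickP => [t' /eqP/lam_expand_inj <- | /(_ t)].
  rewrite (nth_map (tnth t i0)) ?size_tuple ?f_gt0 //.
  by rewrite [in RHS](tnth_nth (tnth t i0)).
by rewrite eqxx.
Qed.

Lemma chiF_lam_expand t : chiF p f lam zeta (lam_expand t) = zeta ^+ tnth t i0.
Proof. by rewrite /chiF coord0_lam_expand. Qed.

Lemma chiF_D : {morph chiF p f lam zeta : a b / a + b >-> a * b}.
Proof.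
move=> a b; have [t ->] := lam_expand_onto a; have [s ->] := lam_expand_onto b.
have p_gt0 := prime_gt0 p_prime.
pose ts := [tuple Ordinal (ltn_pmod (tnth t i + tnth s i) p_gt0) | i < f].
have -> : lam_expand t + lam_expand s = lam_expand ts.
  rewrite /lam_expand -big_split; apply: eq_bigr => i _.
  by rewrite tnth_mktuple /= -mulrDl -natrD (GRing.natr_mod_pchar pcharF).
by rewrite !chiF_lam_expand tnth_mktuple /= (prim_expr_mod zeta_prim) exprD.
Qed.

Lemma chiF0 : chiF p f lam zeta 0 = 1.
Proof.
pose t0 := [tuple Ordinal (prime_gt0 p_prime) | i < f].
have -> : 0 = lam_expand t0.
  by rewrite /lam_expand big1 // => i _; rewrite tnth_mktuple mul0r.
by rewrite chiF_lam_expand tnth_mktuple.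
Qed.

Lemma chiF_nontrivial : exists e, chiF p f lam zeta e != 1.
Proof.
pose t1 := [tuple if val i == 0%N then Ordinal (prime_gt1 p_prime)
                  else Ordinal (prime_gt0 p_prime) | i < f].
exists (lam_expand t1); rewrite chiF_lam_expand tnth_mktuple /=.
by rewrite -(prim_order_dvd zeta_prim) dvdn1 neq_ltn prime_gt1 ?orbT.
Qed.

End CharacterFq.

Theorem mainTheorem4 :
  (* Case R = F_q, q = p^f *)
  (forall (F : finFieldType) (p f : nat) (lam : F) (zeta : algC)
          (n : nat) (C : {set 'rV[F]_n}) (w : 'rV[F]_n),
      prime p -> p \in [pchar F] -> #|F| = (p ^ f)%N ->
      (exists P : {poly 'F_p}, @is_primitive_poly p f P /\
         root (map_poly (fun c : 'F_p => (nat_of_ord c)%:R : F) P) lam) ->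
      p.-primitive_root zeta ->
      subspace_code C ->
      JacAv (dual_code C) w (@xvar F) =
      (#|C|%:R)^-1 *: JacAv C w (xsubst (@chiF F p f lam zeta)))
  /\
  (* Case R = Z_k, k >= 2 *)
  (forall (k : nat) (zeta : algC) (n : nat) (C : {set 'rV['Z_k]_n}) (w : 'rV['Z_k]_n),
      (1 < k)%N ->
      k.-primitive_root zeta ->
      additive_code C ->
      JacAv (dual_code C) w (@xvar _) =
      (#|C|%:R)^-1 *: JacAv C w (xsubst (@chiZ k zeta))).
Proof.
split.
  move=> F p f lam zeta n C w _ pcharF cardF [P [[P_irr [sizeP _]] P_lam]].
  move=> zeta_prim C_subspace.
  have [e chi_e] := chiF_nontrivial pcharF cardF P_irr sizeP P_lam zeta_prim.
  apply: (JacAv_dual_code (chiF_D pcharF cardF P_irr sizeP P_lam zeta_prim)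
                          (chiF0 zeta pcharF cardF P_irr sizeP P_lam)).
    by case/andP: C_subspace.
  exact: separates_dual_subspace C_subspace chi_e.
move=> k zeta n C w k_gt1 zeta_prim C_additive.
apply: (JacAv_dual_code (chiZ_D k_gt1 zeta_prim) (expr0 zeta) w C_additive).
apply: separates_dual_ker1; exact: chiZ_eq1 k_gt1 zeta_prim.
Qed.
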